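(* Let $p$ be an odd prime, let $q\in\mathbb{C}_p$ with $|1-q|_p<1$, let $h\in\mathbb{Z}$, $r\in\mathbb{N}$, $n\ge 0$, and let $w_1,w_2\in\mathbb{N}$ with $w_1\equiv 1\pmod 2$ and $w_2\equiv 1\pmod 2$. Then, for $x\in\mathbb{Z}_p$, \[ \sum_{i=0}^{n}\binom{n}{i}[w_2]_q^{i}[w_1]_q^{n-i}E_{n-i,q^{w_1}}^{(h,r)}(w_2x)\,T_{n,i,q^{w_2}}^{(h,r)}(w_1) =\sum_{i=0}^{n}\binom{n}{i}[w_1]_q^{i}[w_2]_q^{n-i}E_{n-i,q^{w_2}}^{(h,r)}(w_1x)\,T_{n,i,q^{w_1}}^{(h,r)}(w_2), \] where for $w\in\mathbb{N}$, \[ T_{n,i,q}^{(h,r)}(w)=\sum_{j_1,\dots,j_r=0}^{w-1}(-1)^{\sum_{l=1}^r j_l}\,q^{\sum_{l=1}^r(n+h-l-i)j_l}\,[j_1+\cdots+j_r]_q^i . \]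
   Context: $\mathbb{Z}_p$ denotes the $p$-adic integers and $\mathbb{C}_p$ the completion of the algebraic closure of $\mathbb{Q}_p$. For $q\in\mathbb{C}_p$ with $|1-q|_p<1$, the $q$-number is $[x]_q=\frac{1-q^x}{1-q}$, and $[x]_{q^w}=\frac{1-q^{wx}}{1-q^w}$. For a continuous function $f$ on $\mathbb{Z}_p$, the $p$-adic fermionic integral is $\int_{\mathbb{Z}_p}f(y)\,d\mu_{-1}(y)=\lim_{N\to\infty}\sum_{y=0}^{p^N-1}f(y)(-1)^y$; the multivariate integral over $y_1,\dots,y_r$ is the iterated one. For $h\in\mathbb{Z}$, $r\in\mathbb{N}$, the expansions of $q$-Euler polynomials are defined by \[ E_{n,q}^{(h,r)}(x)=\int_{\mathbb{Z}_p}\!\cdots\!\int_{\mathbb{Z}_p} q^{\sum_{l=1}^r(h-l)y_l}\,[x+y_1+\cdots+y_r]_q^n\,d\mu_{-1}(y_1)\cdots d\mu_{-1}(y_r), \] equivalently by the generating function $\sum_{n\ge0}E_{n,q}^{(h,r)}(x)\frac{t^n}{n!}=2^r\sum_{m_1,\dots,m_r=0}^{\infty}q^{\sum_{l=1}^r(h-l)m_l}(-1)^{\sum_{l=1}^r m_l}e^{[x+m_1+\cdots+m_r]_q t}$; $E_{n,q^w}^{(h,r)}$ denotes the same with $q$ replaced by $q^w$. *)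

(* C_p is modelled abstractly (no p-adic library is available),
   as an algebraically closed field K with an absolute value |.| : K -> R
   which is non-archimedean, complete, and restricts to |.|_p on the integers. *)
From HB Require Import structures.
From mathcomp Require Import all_boot all_order all_algebra.
From mathcomp Require Import boolp classical_sets reals.
Set Implicit Arguments. Unset Strict Implicit. Unset Printing Implicit Defensive.
Import Order.TTheory GRing.Theory Num.Theory.
Local Open Scope ring_scope.

Section Padic.
Variables (R : realType) (K : closedFieldType) (absv : K -> R) (p : nat).

Definition cauchy_seq (u : nat -> K) : Prop :=
  forall e : R, 0 < e -> exists N, forall m k, (N <= m)%N -> (N <= k)%N -> absv (u m - u k) < e.

Definition cvg_to (u : nat -> K) (l : K) : Prop :=
  forall e : R, 0 < e -> exists N, forall m, (N <= m)%N -> absv (u m - l) < e.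

Definition Cp_like : Prop :=
  (forall x, absv x = 0 <-> x = 0) /\
  (forall x, 0 <= absv x) /\
  (forall x y, absv (x * y) = absv x * absv y) /\
  (forall x y, absv (x + y) <= Num.max (absv x) (absv y)) /\
  (forall n : nat, absv (n.+1%:R) = (p%:R ^- logn p n.+1 : R)) /\
  (forall u, cauchy_seq u -> exists l, cvg_to u l).

Definition plim (u : nat -> K) : K := xget 0 (fun l => cvg_to u l).

(* Z_p as coherent sequences of residues: x N in [0, p^N), x (N+1) = x N mod p^N *)
Definition is_Zp (x : nat -> nat) : Prop :=
  forall N, (x N < p ^ N)%N /\ (x N.+1 %% p ^ N = x N)%N.

Definition zp_addn (x : nat -> nat) (m : nat) : nat -> nat :=
  fun N => ((x N + m) %% p ^ N)%N.
Definition zp_muln (w : nat) (x : nat -> nat) : nat -> nat :=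
  fun N => ((w * x N) %% p ^ N)%N.

Definition qpowZp (q : K) (x : nat -> nat) : K := plim (fun N => q ^+ x N).

Definition qnumZp (q : K) (x : nat -> nat) : K := (1 - qpowZp q x) / (1 - q).
Definition qnum (q : K) (m : nat) : K := (1 - q ^+ m) / (1 - q).

(* p-adic fermionic integral of f (only the values at y in N are used) *)
Definition fint (f : nat -> K) : K :=
  plim (fun N => \sum_(0 <= y < p ^ N) f y * (-1) ^+ y).

(* iterated integral over y_1, ..., y_r; F receives [:: y_1; ...; y_r] *)
Fixpoint mint (r : nat) (F : seq nat -> K) : K :=
  match r with
  | 0 => F [::]
  | r'.+1 => fint (fun y => mint r' (fun ys => F (y :: ys)))
  end.

Definition Eqhr (n : nat) (q : K) (h : int) (r : nat) (x : nat -> nat) : K :=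
  mint r (fun ys =>
    q ^ (\sum_(l < r) (h - (l.+1)%:Z) * (nth 0%N ys l)%:Z)
      * qnumZp q (zp_addn x (\sum_(l < r) nth 0%N ys l)) ^+ n).

Definition Tqhr (n i : nat) (q : K) (h : int) (r w : nat) : K :=
  \sum_(j : {ffun 'I_r -> 'I_w})
     (-1) ^+ (\sum_(l < r) (j l : nat)) *
     q ^ (\sum_(l < r) (n%:Z + h - (l.+1)%:Z - i%:Z) * (j l : nat)%:Z) *
     qnum q (\sum_(l < r) (j l : nat)) ^+ i.

End Padic.

From HB Require Import structures.
From mathcomp Require Import all_boot all_order all_algebra.
From mathcomp Require Import boolp classical_sets reals.
From mathcomp Require Import ring lra.
Set Implicit Arguments. Unset Strict Implicit. Unset Printing Implicit Defensive.
Import Order.TTheory GRing.Theory Num.Theory.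
Local Open Scope ring_scope.

(* For |1 - q| < 1 the integrand defining E_{n,q^w}^{(h,r)} is an exponential
   polynomial in y_1, ..., y_r, i.e. a finite combination of monomials
   a_1^y_1 ... a_r^y_r with |a_l - 1| < 1.  Since a^(p^N) -> 1, the fermionic
   integral of a^y is 2/(1 + a); this makes the integral linear on exponential
   polynomials and gives, for odd w, the distribution relation
     int F(y) = sum_(0 <= k_l < w) (-1)^(k_1 + ... + k_r) int F(k + w y).
   Expanding [w2 (j_1 + ... + j_r) + w1 (y_1 + ... + y_r) + w1 w2 x]_q
   binomially and applying the distribution relation with w2 turns the
   left-hand side into a double sum over j in [0, w1)^r and k in [0, w2)^r that
   is symmetric in (w1, w2); the right-hand side is the same sum with w1 and w2
   exchanged. *)

Section Padic.
Variables (R : realType) (K : closedFieldType) (absv : K -> R) (p : nat).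
Hypotheses (p_prime : prime p) (p_odd : odd p) (HK : Cp_like absv p).

Lemma absv_eq0 x : absv x = 0 <-> x = 0. Proof. by case: HK. Qed.
Lemma absv_ge0 x : 0 <= absv x. Proof. by case: HK => _ []. Qed.
Lemma absvM x y : absv (x * y) = absv x * absv y. Proof. by case: HK => _ [_ []]. Qed.
Lemma absvD x y : absv (x + y) <= Num.max (absv x) (absv y).
Proof. by case: HK => _ [_ [_ []]]. Qed.
Lemma absv_natS n : absv (n.+1%:R) = (p%:R ^- logn p n.+1 : R).
Proof. by case: HK => _ [_ [_ [_ []]]]. Qed.
Lemma cauchy_seq_cvg u : cauchy_seq absv u -> exists l, cvg_to absv u l.
Proof. by case: HK => _ [_ [_ [_ [_ h]]]]; apply: h. Qed.

Lemma absv0 : absv 0 = 0. Proof. exact/absv_eq0. Qed.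

Lemma absv1 : absv 1 = 1.
Proof. by have := absv_natS 0; rewrite logn1 expr0 invr1. Qed.

Lemma absvN1 : absv (-1) = 1.
Proof.
have sq1 : absv (-1) ^+ 2 = 1 by rewrite expr2 -absvM mulrNN mulr1 absv1.
move/eqP: sq1; rewrite sqrf_eq1 => /orP [/eqP //|/eqP a1].
by move: (absv_ge0 (-1)); rewrite a1 ler0N1.
Qed.

Lemma absvN x : absv (- x) = absv x.
Proof. by rewrite -mulN1r absvM absvN1 mul1r. Qed.

Lemma absv_distC x y : absv (x - y) = absv (y - x).
Proof. by rewrite -absvN opprB. Qed.

Lemma absvX x k : absv (x ^+ k) = absv x ^+ k.
Proof. by elim: k => [|k IH]; rewrite ?expr0 ?absv1 // !exprS absvM IH. Qed.

Lemma absvD_le x y M : absv x <= M -> absv y <= M -> absv (x + y) <= M.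
Proof. by move=> hx hy; apply: le_trans (absvD x y) _; rewrite ge_max hx hy. Qed.

Lemma absvD_lt x y M : absv x < M -> absv y < M -> absv (x + y) < M.
Proof. by move=> hx hy; apply: le_lt_trans (absvD x y) _; rewrite gt_max hx hy. Qed.

Lemma absv_sum_le (I : Type) (s : seq I) (F : I -> K) M : 0 <= M ->
  (forall i, absv (F i) <= M) -> absv (\sum_(i <- s) F i) <= M.
Proof.
move=> M0 FM; elim: s => [|a s IH]; first by rewrite big_nil absv0.
by rewrite big_cons; apply: absvD_le.
Qed.

Lemma absvD_eq x y : absv x < absv y -> absv (x + y) = absv y.
Proof.
move=> xy; apply/eqP; rewrite eq_le absvD_le ?(ltW xy) //=.
have := absvD (x + y) (- x); rewrite addrC addKr absvN => yle.
case: (leP (absv x) (absv (x + y))) => [c|c]; first by move: yle; rewrite max_l.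
by move: yle; rewrite max_r ?(ltW c) // => h; move: xy; rewrite ltNge h.
Qed.

Lemma ltr1p : 1 < (p%:R : R). Proof. by rewrite ltr1n prime_gt1. Qed.
Lemma ltr0p : 0 < (p%:R : R). Proof. exact: lt_trans ltr1p. Qed.

Lemma absv_nat_dvd n : (0 < n)%N -> (p %| n)%N -> absv (n%:R) <= p%:R^-1.
Proof.
case: n => [//|n] _ pn; rewrite absv_natS.
have logn_ge1 : (1 <= logn p n.+1)%N by rewrite logn_gt0 mem_primes p_prime pn.
rewrite lef_pV2 ?posrE ?exprn_gt0 ?ltr0p //.
by rewrite -{1}(expr1 (p%:R : R)) ler_eXn2l // ltr1p.
Qed.

Lemma absv2 : absv 2%:R = 1.
Proof.
have p_gt2 : (2 < p)%N by move: (prime_gt1 p_prime) p_odd; case: p => [|[|[|]]].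
rewrite absv_natS logn_coprime ?expr0 ?invr1 // prime_coprime //.
by apply/negP => /(dvdn_leq (isT : (0 < 2)%N)); rewrite leqNgt p_gt2.
Qed.

Lemma absvX_le1 a k : absv a <= 1 -> absv (a ^+ k) <= 1.
Proof. by move=> a1; rewrite absvX exprn_ile1 ?absv_ge0. Qed.

Lemma absv_subX1_le a n : absv a <= 1 -> absv (a ^+ n - 1) <= absv (a - 1).
Proof.
move=> a1; rewrite subrX1 absvM ler_piMr ?absv_ge0 //.
by apply: absv_sum_le => // i; exact: absvX_le1.
Qed.

Lemma absv_subXX_le a b n : absv a <= 1 -> absv b <= 1 ->
  absv (a ^+ n - b ^+ n) <= absv (a - b).
Proof.
move=> a1 b1; rewrite subrXX absvM ler_piMr ?absv_ge0 //.
apply: absv_sum_le => // i; rewrite absvM.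
by apply: mulr_ile1; rewrite ?absv_ge0 ?absvX_le1.
Qed.

Definition principal (a : K) : Prop := absv (a - 1) < 1.

Lemma principal1 : principal 1.
Proof. by rewrite /principal subrr absv0. Qed.

Lemma principal_absv a : principal a -> absv a = 1.
Proof. by move=> a1; rewrite -(subrK 1 a) absvD_eq absv1. Qed.

Lemma principal_neq0 a : principal a -> a != 0.
Proof. by move/principal_absv; apply: contra_eqN => /eqP ->; rewrite absv0 eq_sym oner_eq0. Qed.

Lemma principal_absv1D a : principal a -> absv (1 + a) = 1.
Proof.
move=> a1; have -> : 1 + a = (a - 1) + 2%:R by rewrite -natr1; ring.
by rewrite absvD_eq absv2.
Qed.

Lemma principal_1D_neq0 a : principal a -> 1 + a != 0.
Proof. by move/principal_absv1D; apply: contra_eqN => /eqP ->; rewrite absv0 eq_sym oner_eq0. Qed.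

Lemma principalM a b : principal a -> principal b -> principal (a * b).
Proof.
move=> a1 b1; rewrite /principal.
have -> : a * b - 1 = a * (b - 1) + (a - 1) by ring.
by apply: absvD_lt; rewrite // absvM principal_absv // mul1r.
Qed.

Lemma principalX a n : principal a -> principal (a ^+ n).
Proof. by move=> a1; apply: le_lt_trans (a1); apply: absv_subX1_le; rewrite principal_absv. Qed.

Lemma principalV a : principal a -> principal a^-1.
Proof.
move=> a1; have a0 := principal_neq0 a1.
have absvVa : absv a^-1 = 1.
  by have := absvM a^-1 a; rewrite mulVf // absv1 (principal_absv a1) mulr1.
rewrite /principal; have -> : a^-1 - 1 = a^-1 * (1 - a) by rewrite mulrBr mulr1 mulVf.
by rewrite absvM absvVa mul1r absv_distC.
Qed.

Lemma principal_zpow a (k : int) : principal a -> principal (a ^ k).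
Proof. by case: k => n a1; [exact: principalX | exact/principalV/principalX]. Qed.


Lemma bernoulli_ineq n (a : R) : 0 <= a -> 1 + n%:R * a <= (1 + a) ^+ n.
Proof.
move=> a0; elim: n => [|n IH]; first by rewrite mul0r addr0 expr0.
rewrite exprS -natr1.
have := ler_wpM2l (addr_ge0 ler01 a0) IH.
have : 0 <= n%:R * a * a by rewrite !mulr_ge0.
by move=> ? ?; nra.
Qed.

Lemma exprn_lt_eps (c e : R) : 0 <= c -> c < 1 -> 0 < e -> exists N, c ^+ N < e.
Proof.
move=> c0 c1 e0; have [->|cn0] := eqVneq c 0; first by exists 1%N; rewrite expr1.
have cpos : 0 < c by rewrite lt_def cn0 c0.
set a := c^-1 - 1; have a0 : 0 < a by rewrite subr_gt0 invf_gt1.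
have ea : 1 + a = c^-1 by rewrite /a; ring.
have [N e_lt] : exists N, e^-1 / a < N%:R.
  by exists (Num.bound (e^-1 / a)); rewrite archi_boundP // ltW // divr_gt0 ?invr_gt0.
exists N; rewrite -ltf_pV2 ?posrE ?exprn_gt0 // -exprVn -ea.
apply: (lt_le_trans _ (bernoulli_ineq N (ltW a0))).
rewrite -(ltr_pM2r a0) mulrAC -mulrA divff ?mulr1 ?gt_eqF // in e_lt.
by apply: lt_trans e_lt _; rewrite ltrDr.
Qed.

(* p divides C(p, i) for 0 < i < p, so raising to the p-th power shrinks
   |b - 1| by the factor max(1/p, |b - 1|). *)
Lemma absv_subXp1_le b t : 0 <= t -> t < 1 -> absv (b - 1) <= t ->
  absv (b ^+ p - 1) <= t * Num.max p%:R^-1 t.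
Proof.
move=> t0 t1 bt; set d := b - 1.
have -> : b ^+ p - 1 = \sum_(i < p) d ^+ i.+1 *+ 'C(p, i.+1).
  by rewrite -(subrK 1 b) exprD1n big_ord_recl expr0 bin0 mulr1n addrAC subrr add0r.
apply: absv_sum_le => [|i]; first by rewrite mulr_ge0 // le_max t0 orbT.
rewrite -mulr_natr absvM absvX.
have dX_le : absv d ^+ i.+1 <= t.
  rewrite exprS (le_trans _ bt) // ler_piMr ?absv_ge0 //.
  by rewrite exprn_ile1 ?absv_ge0 ?(le_trans bt (ltW t1)).
have [ip|ip] := ltnP i.+1 p.
  have pC : absv 'C(p, i.+1)%:R <= p%:R^-1.
    by apply: absv_nat_dvd; [rewrite bin_gt0 ltnW | rewrite prime_dvd_bin ?ip].
  apply: le_trans (ler_pM (exprn_ge0 _ (absv_ge0 _)) (absv_ge0 _) dX_le pC) _.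
  by rewrite ler_wpM2l // le_max lexx.
have -> : i.+1 = p by apply/eqP; rewrite eqn_leq ip andbT ltn_ord.
rewrite binn absv1 mulr1.
apply: le_trans (_ : absv d ^+ 2 <= _).
  by rewrite ler_wiXn2l ?absv_ge0 ?prime_gt1 // (le_trans bt (ltW t1)).
rewrite expr2 (le_trans (ler_pM (absv_ge0 _) (absv_ge0 _) bt bt)) //.
by rewrite ler_wpM2l // le_max lexx orbT.
Qed.

Lemma absv_subXpn1_le a : principal a -> forall N,
  absv (a ^+ (p ^ N) - 1) <= absv (a - 1) * Num.max p%:R^-1 (absv (a - 1)) ^+ N.
Proof.
move=> a1; set d := absv (a - 1); set c := Num.max _ _.
have d0 : 0 <= d := absv_ge0 _.
have c0 : 0 <= c by rewrite le_max d0 orbT.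
have dc : d <= c by rewrite le_max lexx orbT.
have c1 : c <= 1 by rewrite ge_max (ltW a1) andbT invf_le1 ?ltr0p // ltW // ltr1p.
elim=> [|N IH]; first by rewrite expn0 expr1 expr0 mulr1.
rewrite expnSr exprM; set t := d * c ^+ N.
have t0 : 0 <= t by rewrite mulr_ge0 // exprn_ge0.
have td : t <= d by rewrite ler_piMr // exprn_ile1.
apply: le_trans (absv_subXp1_le t0 (le_lt_trans td a1) IH) _.
by rewrite exprSr mulrA ler_wpM2l // ge_max le_max lexx (le_trans td dc).
Qed.

Lemma cvg_to_unique u a b : cvg_to absv u a -> cvg_to absv u b -> a = b.
Proof.
move=> ua ub; apply/eqP; rewrite -subr_eq0; apply/eqP/absv_eq0/eqP.
rewrite eq_le absv_ge0 andbT; apply/ler_addgt0Pr => e e0; rewrite add0r.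
have [N1 h1] := ua e e0; have [N2 h2] := ub e e0; set N := maxn N1 N2.
have -> : a - b = (u N - b) - (u N - a) by ring.
by rewrite ltW // absvD_lt ?absvN ?h1 ?h2 ?leq_maxl ?leq_maxr.
Qed.

Lemma plimE u l : cvg_to absv u l -> plim absv u = l.
Proof. by move=> ul; apply: xget_unique => // l' ul'; exact: cvg_to_unique ul' ul. Qed.

Lemma cvg_to_cst c : cvg_to absv (fun _ => c) c.
Proof. by move=> e e0; exists 0%N => m _; rewrite subrr absv0. Qed.

Lemma cvg_toD u v a b : cvg_to absv u a -> cvg_to absv v b ->
  cvg_to absv (fun n => u n + v n) (a + b).
Proof.
move=> ua vb e e0; have [N1 h1] := ua e e0; have [N2 h2] := vb e e0.
exists (maxn N1 N2) => m; rewrite geq_max => /andP [m1 m2].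
have -> : u m + v m - (a + b) = (u m - a) + (v m - b) by ring.
by rewrite absvD_lt ?h1 ?h2.
Qed.

Lemma cvg_toZ c u a : cvg_to absv u a -> cvg_to absv (fun n => c * u n) (c * a).
Proof.
move=> ua e e0; set k := absv c + 1.
have k0 : 0 < k by rewrite ltr_wpDl ?absv_ge0.
have [N h] := ua (e / k) (divr_gt0 e0 k0).
exists N => m mN; rewrite -mulrBr absvM.
apply: le_lt_trans (_ : _ <= k * absv (u m - a)) _.
  by rewrite ler_wpM2r ?absv_ge0 // lerDl.
by rewrite -ltr_pdivlMl // mulrC h.
Qed.

Lemma cvg_to_sum (I : Type) (s : seq I) (U : I -> nat -> K) (A : I -> K) :
  (forall i, cvg_to absv (U i) (A i)) ->
  cvg_to absv (fun n => \sum_(i <- s) U i n) (\sum_(i <- s) A i).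
Proof.
move=> UA; elim: s => [|i s IH].
  by under eq_fun do rewrite big_nil; rewrite big_nil; exact: cvg_to_cst.
under eq_fun do rewrite big_cons; rewrite big_cons; exact: cvg_toD.
Qed.

Lemma cvg_to_expr_pn a : principal a -> cvg_to absv (fun N => a ^+ (p ^ N)) 1.
Proof.
move=> a1 e e0; set c := Num.max p%:R^-1 (absv (a - 1)).
have c0 : 0 <= c by rewrite le_max absv_ge0 orbT.
have c1 : c < 1 by rewrite gt_max a1 andbT invf_lt1 ?ltr0p ?ltr1p.
have [N0 cN0] := exprn_lt_eps c0 c1 e0.
exists N0 => N N0N; apply: le_lt_trans (absv_subXpn1_le a1 N) _.
apply: le_lt_trans cN0; apply: le_trans (ler_wiXn2l c0 (ltW c1) N0N).
by rewrite ler_piMl ?exprn_ge0 // ltW.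
Qed.

Lemma alternating_geom_sum (a : K) n : odd n ->
  (1 + a) * \sum_(0 <= y < n) (- a) ^+ y = 1 + a ^+ n.
Proof.
move=> n_odd; rewrite big_mkord.
have := subrX1 (- a) n; rewrite exprNn -(@signr_odd K n) n_odd expr1 => geom.
have -> : 1 + a = - (- a - 1) by ring.
by rewrite mulNr -geom; ring.
Qed.

(* The partial sums over [0, p^N) of (-1)^y a^y are (1 + a^(p^N)) / (1 + a). *)
Lemma fint_exp (I : Type) (s : seq I) (c a : I -> K) : (forall i, principal (a i)) ->
  fint absv p (fun y => \sum_(i <- s) c i * a i ^+ y) =
  \sum_(i <- s) c i * (2%:R / (1 + a i)).
Proof.
move=> aP; apply: plimE.
have partial_sum N : \sum_(0 <= y < p ^ N) (\sum_(i <- s) c i * a i ^+ y) * (-1) ^+ y =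
    \sum_(i <- s) c i / (1 + a i) * (1 + a i ^+ (p ^ N)).
  under eq_bigr do rewrite big_distrl /=.
  rewrite exchange_big /=; apply: eq_bigr => i _.
  have pN_odd : odd (p ^ N) by rewrite oddX p_odd orbT.
  rewrite -(alternating_geom_sum (a i) pN_odd) mulrA divfK ?principal_1D_neq0 //.
  rewrite mulr_sumr; apply: eq_bigr => y _.
  by rewrite -mulrA [(- a i) ^+ _]exprNn (mulrC (a i ^+ y)).
under eq_fun do rewrite partial_sum.
apply: cvg_to_sum => i.
have -> : c i * (2%:R / (1 + a i)) = c i / (1 + a i) * (1 + 1) by ring.
by apply/cvg_toZ/cvg_toD; [exact: cvg_to_cst | exact: cvg_to_expr_pn].
Qed.

Definition exp_poly (r : nat) {I : Type} (s : seq I) (c : I -> K) (a : I -> nat -> K)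
    (ys : seq nat) : K :=
  \sum_(i <- s) c i * \prod_(l < r) a i l ^+ nth 0%N ys l.

Definition is_exp_poly (r : nat) (F : seq nat -> K) : Prop :=
  exists (I : Type) (s : seq I) (c : I -> K) (a : I -> nat -> K),
    (forall i l, principal (a i l)) /\ F =1 exp_poly r s c a.

Lemma eq_mint {r} (F G : seq nat -> K) : F =1 G -> mint absv p r F = mint absv p r G.
Proof. by move=> /funext ->. Qed.

Lemma mint_exp_poly r (I : Type) (s : seq I) c a : (forall i l, principal (a i l)) ->
  mint absv p r (exp_poly r s c a) = \sum_(i <- s) c i * \prod_(l < r) (2%:R / (1 + a i l)).
Proof.
elim: r I s c a => [|r IH] I s c a aP.
  by apply: eq_bigr => i _; rewrite !big_ord0.
have head_out y : (fun ys => exp_poly r.+1 s c a (y :: ys)) =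
    exp_poly r s (fun i => c i * a i 0%N ^+ y) (fun i l => a i l.+1).
  by apply: funext => ys; apply: eq_bigr => i _; rewrite big_ord_recl mulrA.
rewrite /=; under eq_fun do rewrite head_out IH //.
under eq_fun do under eq_bigr do rewrite mulrAC.
rewrite fint_exp //; apply: eq_bigr => i _.
by rewrite big_ord_recl mulrAC -mulrA mulrC.
Qed.

Lemma is_exp_poly0 r : is_exp_poly r (fun=> 0).
Proof.
exists unit, [::], (fun=> 0), (fun _ _ => 1).
by split=> [|ys]; [move=> *; exact: principal1 | rewrite /exp_poly big_nil].
Qed.

Lemma mint0 r : mint absv p r (fun=> 0) = 0.
Proof.
have zero_rep : (fun=> 0) =1 exp_poly r [::] (fun _ : unit => 0) (fun _ _ => 1).
  by move=> ys; rewrite /exp_poly big_nil.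
by rewrite (eq_mint zero_rep) mint_exp_poly ?big_nil // => *; exact: principal1.
Qed.

Section ExpPolySum.
Variables (r : nat) (I1 I2 : Type) (s1 : seq I1) (s2 : seq I2).
Variables (c1 : I1 -> K) (c2 : I2 -> K) (a1 : I1 -> nat -> K) (a2 : I2 -> nat -> K).

Let s := map inl s1 ++ map inr s2.
Let c (i : I1 + I2) := match i with inl j => c1 j | inr j => c2 j end.
Let a (i : I1 + I2) := match i with inl j => a1 j | inr j => a2 j end.

Lemma exp_polyD ys : exp_poly r s1 c1 a1 ys + exp_poly r s2 c2 a2 ys = exp_poly r s c a ys.
Proof. by rewrite /exp_poly big_cat !big_map. Qed.

Lemma mint_exp_polyD : (forall i l, principal (a1 i l)) -> (forall i l, principal (a2 i l)) ->
  mint absv p r (fun ys => exp_poly r s1 c1 a1 ys + exp_poly r s2 c2 a2 ys) =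
  mint absv p r (exp_poly r s1 c1 a1) + mint absv p r (exp_poly r s2 c2 a2).
Proof.
move=> a1P a2P; have aP : forall i l, principal (a i l) by case.
by rewrite (eq_mint exp_polyD) !mint_exp_poly // big_cat !big_map.
Qed.

End ExpPolySum.

Lemma exp_polyZ r (I : Type) (s : seq I) c a k ys :
  k * exp_poly r s c a ys = exp_poly r s (fun i => k * c i) a ys.
Proof. by rewrite /exp_poly mulr_sumr; apply: eq_bigr => i _; rewrite mulrA. Qed.

Lemma is_exp_polyD r F G : is_exp_poly r F -> is_exp_poly r G ->
  is_exp_poly r (fun ys => F ys + G ys).
Proof.
move=> [I1 [s1 [c1 [a1 [a1P eF]]]]] [I2 [s2 [c2 [a2 [a2P eG]]]]].
exists (I1 + I2)%type; do 3 eexists; split; last by move=> ys; rewrite eF eG exp_polyD.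
by case.
Qed.

Lemma mintD r F G : is_exp_poly r F -> is_exp_poly r G ->
  mint absv p r (fun ys => F ys + G ys) = mint absv p r F + mint absv p r G.
Proof.
move=> [I1 [s1 [c1 [a1 [a1P eF]]]]] [I2 [s2 [c2 [a2 [a2P eG]]]]].
rewrite (eq_mint eF) (eq_mint eG) -mint_exp_polyD //.
by apply: eq_mint => ys; rewrite eF eG.
Qed.

Lemma is_exp_polyZ r k F : is_exp_poly r F -> is_exp_poly r (fun ys => k * F ys).
Proof.
move=> [I [s [c [a [aP eF]]]]]; exists I, s, (fun i => k * c i), a.
by split=> // ys; rewrite eF exp_polyZ.
Qed.

Lemma mintZ r k F : is_exp_poly r F ->
  mint absv p r (fun ys => k * F ys) = k * mint absv p r F.
Proof.
move=> [I [s [c [a [aP eF]]]]].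
have kF : (fun ys => k * F ys) =1 exp_poly r s (fun i => k * c i) a.
  by move=> ys; rewrite eF exp_polyZ.
rewrite (eq_mint kF) (eq_mint eF) !mint_exp_poly // mulr_sumr.
by apply: eq_bigr => i _; rewrite mulrA.
Qed.

Lemma is_exp_poly_sum r (J : Type) (t : seq J) (H : J -> seq nat -> K) :
  (forall j, is_exp_poly r (H j)) -> is_exp_poly r (fun ys => \sum_(j <- t) H j ys).
Proof.
move=> HP; elim: t => [|j t IH]; first by under eq_fun do rewrite big_nil; exact: is_exp_poly0.
by under eq_fun do rewrite big_cons; exact: is_exp_polyD.
Qed.

Lemma mint_sum r (J : Type) (t : seq J) (H : J -> seq nat -> K) :
  (forall j, is_exp_poly r (H j)) ->
  mint absv p r (fun ys => \sum_(j <- t) H j ys) = \sum_(j <- t) mint absv p r (H j).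
Proof.
move=> HP; elim: t => [|j t IH]; first by under eq_fun do rewrite big_nil; rewrite mint0 big_nil.
under eq_fun do rewrite big_cons.
by rewrite mintD ?IH ?big_cons //; exact: is_exp_poly_sum.
Qed.

Lemma is_exp_poly_affine_pow r (b g : nat -> K) (u v : K) m :
  (forall l, principal (b l)) -> (forall l, principal (g l)) ->
  is_exp_poly r (fun ys => \prod_(l < r) b l ^+ nth 0%N ys l *
                   (u + v * \prod_(l < r) g l ^+ nth 0%N ys l) ^+ m).
Proof.
move=> bP gP; exists 'I_m.+1, (index_enum 'I_m.+1),
  (fun k : 'I_m.+1 => u ^+ (m - k) * v ^+ k *+ 'C(m, k)),
  (fun (k : 'I_m.+1) l => b l * g l ^+ k).
split=> [k l|ys]; first exact/principalM/principalX.
rewrite /exp_poly exprDn mulr_sumr; apply: eq_bigr => k _.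
have -> : \prod_(l < r) (b l * g l ^+ k) ^+ nth 0%N ys l =
    \prod_(l < r) b l ^+ nth 0%N ys l * (\prod_(l < r) g l ^+ nth 0%N ys l) ^+ k.
  by rewrite -prodrXl -big_split; apply: eq_bigr => l _; rewrite exprMn exprAC.
by rewrite mulrnAr mulrnAl exprMn; congr (_ *+ _); ring.
Qed.

Definition dilate_shift r w (k : {ffun 'I_r -> 'I_w}) (u : seq nat) : seq nat :=
  [seq (k l : nat) + w * nth 0%N u l | l <- enum 'I_r].

Lemma nth_dilate_shift r w (k : {ffun 'I_r -> 'I_w}) u (l : 'I_r) :
  nth 0%N (dilate_shift k u) l = (k l + w * nth 0%N u l)%N.
Proof. by rewrite /dilate_shift (nth_map l) ?size_enum_ord // nth_ord_enum. Qed.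

(* Splitting y = k + w u with 0 <= k < w: on each exponential a^y this is
   2/(1+a) = sum_(k<w) (-a)^k * 2/(1+a^w), valid because w is odd. *)
Lemma mint_distribution r w F : odd w -> is_exp_poly r F ->
  mint absv p r F = \sum_(k : {ffun 'I_r -> 'I_w})
     (-1) ^+ (\sum_(l < r) (k l : nat)) * mint absv p r (fun u => F (dilate_shift k u)).
Proof.
move=> w_odd [I [s [c [a [aP eF]]]]].
have aXP i l : principal (a i l ^+ w) by exact: principalX.
have eFk (k : {ffun 'I_r -> 'I_w}) : (fun u => F (dilate_shift k u)) =1
    exp_poly r s (fun i => c i * \prod_(l < r) a i l ^+ k l) (fun i l => a i l ^+ w).
  move=> u; rewrite eF; apply: eq_bigr => i _; rewrite -mulrA -big_split.
  by congr (_ * _); apply: eq_bigr => l _; rewrite nth_dilate_shift exprD exprM.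
rewrite (eq_mint eF) mint_exp_poly //.
under [RHS]eq_bigr => k _ do rewrite (eq_mint (eFk k)) mint_exp_poly // mulr_sumr.
rewrite exchange_big; apply: eq_bigr => i _.
have sign_in (k : {ffun 'I_r -> 'I_w}) :
    (-1) ^+ (\sum_(l < r) (k l : nat)) *
      (c i * \prod_(l < r) a i l ^+ k l * \prod_(l < r) (2%:R / (1 + a i l ^+ w))) =
    c i * \prod_(l < r) ((- a i l) ^+ k l * (2%:R / (1 + a i l ^+ w))).
  rewrite [in RHS]big_split /=; have -> : \prod_(l < r) (- a i l) ^+ k l =
      (-1) ^+ (\sum_(l < r) (k l : nat)) * \prod_(l < r) a i l ^+ k l.
    by rewrite expr_sum -big_split; apply: eq_bigr => l _; exact: exprNn.
  by ring.
under [RHS]eq_bigr do rewrite sign_in.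
rewrite -mulr_sumr -(bigA_distr_bigA (fun (l : 'I_r) (j : 'I_w) =>
  (- a i l) ^+ j * (2%:R / (1 + a i l ^+ w)))).
congr (_ * _); apply: eq_bigr => l _.
have geom := alternating_geom_sum (a i l) w_odd; rewrite big_mkord in geom.
have a1 := principal_1D_neq0 (aP i l); have aw1 := principal_1D_neq0 (aXP i l).
rewrite -mulr_suml -[\sum_(j < w) _](mulKf a1) geom.
by field; rewrite a1 aw1.
Qed.

Lemma is_Zp_modn x : is_Zp p x -> forall k d, (x (k + d) %% p ^ k)%N = x k.
Proof.
move=> xZp k; elim=> [|d IH]; first by rewrite addn0 modn_small //; case: (xZp k).
rewrite addnS -(modn_dvdm _ (dvdn_exp2l p (leq_addr d k))).
by case: (xZp (k + d)) => _ ->.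
Qed.

Lemma absv_sub_expr_congr a m k N : principal a -> (m = k %[mod p ^ N])%N ->
  absv (a ^+ m - a ^+ k) <= absv (a ^+ (p ^ N) - 1).
Proof.
move=> a1 mk; rewrite (divn_eq m (p ^ N)) (divn_eq k (p ^ N)) mk.
rewrite !exprD !(mulnC _ (p ^ N)%N) !exprM; set b := a ^+ (p ^ N).
have b_le1 : absv b <= 1 by rewrite absvX principal_absv ?expr1n.
have -> : b ^+ (m %/ p ^ N) * a ^+ (k %% p ^ N) - b ^+ (k %/ p ^ N) * a ^+ (k %% p ^ N) =
    a ^+ (k %% p ^ N) * ((b ^+ (m %/ p ^ N) - 1) - (b ^+ (k %/ p ^ N) - 1)) by ring.
rewrite absvM absvX principal_absv // expr1n mul1r.
by apply: absvD_le; rewrite ?absvN absv_subX1_le.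
Qed.

Lemma cvg_expr_Zp a x : principal a -> is_Zp p x ->
  exists X, cvg_to absv (fun N => a ^+ x N) X.
Proof.
move=> a1 xZp; apply: cauchy_seq_cvg => e e0.
have [N0 aN0] := cvg_to_expr_pn a1 e0.
exists N0 => m k mN0 kN0; set M := minn m k.
have [Mm Mk] : (M <= m)%N /\ (M <= k)%N by rewrite geq_minl geq_minr.
apply: le_lt_trans (absv_sub_expr_congr (N := M) a1 _) _.
  by rewrite -(subnKC Mm) -(subnKC Mk) !is_Zp_modn.
by apply: aN0; rewrite leq_min mN0 kN0.
Qed.

Lemma cvg_to_absv_le1 (u : nat -> K) X : (forall N, absv (u N) <= 1) ->
  cvg_to absv u X -> absv X <= 1.
Proof.
move=> u1 uX; have [N uN] := uX 1 ltr01.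
rewrite -(subKr (u N) X); apply: absvD_le; first exact: u1.
by rewrite absvN ltW // uN.
Qed.

Lemma qpowZp_affine a X x w1 w2 m : principal a -> cvg_to absv (fun N => a ^+ x N) X ->
  qpowZp absv (a ^+ w1) (zp_addn p (zp_muln p w2 x) m) = (a ^+ w1) ^+ m * X ^+ (w1 * w2).
Proof.
move=> a1 aX; apply: plimE => e e0; set b := a ^+ w1.
have b1 : principal b by exact: principalX.
have axN_le1 N : absv (a ^+ x N) <= 1 by rewrite absvX principal_absv ?expr1n.
have [N1 bN1] := cvg_to_expr_pn b1 e0; have [N2 aN2] := aX e e0.
exists (maxn N1 N2) => N; rewrite geq_max => /andP [N1N N2N].
rewrite /zp_addn /zp_muln.
have -> : b ^+ ((w2 * x N %% p ^ N + m) %% p ^ N) - b ^+ m * X ^+ (w1 * w2) =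
    (b ^+ ((w2 * x N %% p ^ N + m) %% p ^ N) - b ^+ (w2 * x N + m)) +
    b ^+ m * ((a ^+ x N) ^+ (w1 * w2) - X ^+ (w1 * w2)).
  by rewrite exprD /b -!exprM [(x N * _)%N]mulnC -mulnA; ring.
apply: absvD_lt.
  apply: le_lt_trans (absv_sub_expr_congr (N := N) b1 _) _; first by rewrite modn_mod modnDml.
  exact: bN1.
rewrite absvM absvX principal_absv // expr1n mul1r.
by apply: le_lt_trans (absv_subXX_le _ (axN_le1 N) (cvg_to_absv_le1 axN_le1 aX)) (aN2 N N2N).
Qed.

Lemma zpow_sum_nat (z : K) r (e : 'I_r -> int) (k : 'I_r -> nat) : z != 0 ->
  z ^ (\sum_(l < r) e l * (k l)%:Z) = \prod_(l < r) (z ^ e l) ^+ k l.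
Proof.
move=> z0; elim/big_rec2: _ => [|l a b _ <-]; first by rewrite expr0z.
by rewrite expfzDr // -exprz_exp.
Qed.

Lemma exprnzAC (z : K) (w : nat) (a : int) : (z ^+ w) ^ a = (z ^ a) ^+ w.
Proof.
rewrite -[z ^+ w]/(z ^ w%:Z) -[(z ^ a) ^+ w]/((z ^ a) ^ w%:Z) !exprz_exp.
by rewrite mulrC.
Qed.

Section Symmetry.
Variables (q : K) (h : int) (r n : nat) (Y : K).
Hypothesis q1 : principal q.

Definition weight (l : nat) : K := q ^ (h - (l.+1)%:Z).

(* With Y = q^t this is [s + t]_q; it is used with t = w1 w2 x. *)
Definition qshift (s : nat) : K := (1 - q ^+ s * Y) / (1 - q).

Definition ysum (ys : seq nat) : nat := (\sum_(l < r) nth 0%N ys l)%N.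
Definition fsum w (j : {ffun 'I_r -> 'I_w}) : nat := (\sum_(l < r) (j l : nat))%N.

Definition integrand (v c m : nat) (ys : seq nat) : K :=
  \prod_(l < r) (weight l ^+ v) ^+ nth 0%N ys l * qshift (c + v * ysum ys) ^+ m.

Definition sym_sum (w1 w2 : nat) : K :=
  \sum_(j : {ffun 'I_r -> 'I_w1}) \sum_(k : {ffun 'I_r -> 'I_w2})
     (-1) ^+ (fsum j + fsum k) * \prod_(l < r) weight l ^+ (w2 * j l + w1 * k l) *
     mint absv p r (integrand (w1 * w2) (w2 * fsum j + w1 * fsum k) n).

Lemma sym_sumC w1 w2 : sym_sum w1 w2 = sym_sum w2 w1.
Proof.
rewrite /sym_sum exchange_big; apply: eq_bigr => k _; apply: eq_bigr => j _.
rewrite addnC mulnC [(w1 * fsum k + _)%N]addnC.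
by congr (_ * _ * _); apply: eq_bigr => l _; rewrite addnC.
Qed.

Lemma weight_principal l : principal (weight l).
Proof. exact: principal_zpow. Qed.

Lemma is_exp_poly_integrand v c m : is_exp_poly r (integrand v c m).
Proof.
have [I [s [cf [a [aP e]]]]] := is_exp_poly_affine_pow r ((1 - q)^-1) (- (q ^+ c * Y) / (1 - q)) m
  (fun l => principalX v (weight_principal l)) (fun=> principalX v q1).
exists I, s, cf, a; split=> // ys; rewrite -e /integrand /qshift.
by congr (_ * _ ^+ _); rewrite /ysum exprD exprM prodrXr; ring.
Qed.

Lemma ysum_dilate_shift w (k : {ffun 'I_r -> 'I_w}) u :
  ysum (dilate_shift k u) = (fsum k + w * ysum u)%N.
Proof.
rewrite /ysum /fsum big_distrr -big_split; apply: eq_bigr => l _.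
by rewrite nth_dilate_shift.
Qed.

Lemma mint_integrand_distribution w1 w2 c : odd w2 ->
  mint absv p r (integrand w1 c n) =
  \sum_(k : {ffun 'I_r -> 'I_w2}) (-1) ^+ fsum k * \prod_(l < r) weight l ^+ (w1 * k l) *
     mint absv p r (integrand (w1 * w2) (c + w1 * fsum k) n).
Proof.
move=> w2_odd; rewrite (mint_distribution w2_odd (is_exp_poly_integrand _ _ _)).
apply: eq_bigr => k _; rewrite -mulrA; congr (_ * _).
rewrite -mintZ; last exact: is_exp_poly_integrand.
apply: eq_mint => u; rewrite /integrand ysum_dilate_shift mulrA; congr (_ * _ ^+ _).
  rewrite -big_split; apply: eq_bigr => l _.
  by rewrite nth_dilate_shift -!exprM mulnDr exprD mulnA.
by rewrite mulnDr addnA mulnA.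
Qed.

(* [w2 J + t]_q = [w2]_q [J]_(q^w2) + q^(w2 J) [t]_q, expanded binomially. *)
Lemma mint_integrand_binomial w1 w2 J : q ^+ w2 != 1 ->
  mint absv p r (integrand w1 (w2 * J) n) =
  \sum_(i < n.+1) 'C(n, i)%:R * (qnum q w2 * qnum (q ^+ w2) J) ^+ i *
     ((q ^+ w2) ^+ J) ^+ (n - i) * mint absv p r (integrand w1 0 (n - i)).
Proof.
move=> qw2.
have q_ne1 : 1 - q != 0 by apply: contra qw2; rewrite subr_eq0 => /eqP <-; rewrite expr1n.
have qw2_ne1 : 1 - q ^+ w2 != 0 by rewrite subr_eq0 eq_sym.
set cf := fun i : 'I_n.+1 => 'C(n, i)%:R * (qnum q w2 * qnum (q ^+ w2) J) ^+ i *
  ((q ^+ w2) ^+ J) ^+ (n - i).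
have expand : integrand w1 (w2 * J) n =1
    (fun ys => \sum_(i <- index_enum 'I_n.+1) cf i * integrand w1 0 (n - i) ys).
  move=> ys; rewrite /integrand; have -> : qshift (w2 * J + w1 * ysum ys) =
      (q ^+ w2) ^+ J * qshift (0 + w1 * ysum ys) + qnum q w2 * qnum (q ^+ w2) J.
    by rewrite /qshift /qnum add0n exprD -exprM; field; rewrite q_ne1 qw2_ne1.
  rewrite exprDn mulr_sumr; apply: eq_bigr => i _.
  by rewrite /cf exprMn -mulr_natl; ring.
rewrite (eq_mint expand) mint_sum; last by move=> i; exact/is_exp_polyZ/is_exp_poly_integrand.
by apply: eq_bigr => i _; rewrite mintZ //; exact: is_exp_poly_integrand.
Qed.

Lemma Eqhr_mint x w1 w2 m : q ^+ w1 != 1 ->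
  (forall k, qpowZp absv (q ^+ w1) (zp_addn p (zp_muln p w2 x) k) = (q ^+ w1) ^+ k * Y) ->
  qnum q w1 ^+ m * Eqhr absv p m (q ^+ w1) h r (zp_muln p w2 x) =
  mint absv p r (integrand w1 0 m).
Proof.
move=> qw1 qpowY.
have q_ne1 : 1 - q != 0 by apply: contra qw1; rewrite subr_eq0 => /eqP <-; rewrite expr1n.
have qw1_ne1 : 1 - q ^+ w1 != 0 by rewrite subr_eq0 eq_sym.
rewrite /Eqhr (eq_mint (G := fun ys => ((1 - q) / (1 - q ^+ w1)) ^+ m * integrand w1 0 m ys) _).
  rewrite mintZ ?mulrA -?exprMn; last exact: is_exp_poly_integrand.
  have -> : qnum q w1 * ((1 - q) / (1 - q ^+ w1)) = 1.
    by rewrite /qnum; field; rewrite q_ne1 qw1_ne1.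
  by rewrite expr1n mul1r.
move=> ys; rewrite /qnumZp qpowY zpow_sum_nat ?expf_neq0 ?principal_neq0 //.
rewrite /integrand /qshift add0n -exprM mulrCA -exprMn; congr (_ * _ ^+ _).
  by apply: eq_bigr => l _; rewrite exprnzAC.
by rewrite /ysum; field; rewrite q_ne1 qw1_ne1.
Qed.

Lemma Tqhr_expand w1 w2 i : (i <= n)%N ->
  Tqhr n i (q ^+ w2) h r w1 =
  \sum_(j : {ffun 'I_r -> 'I_w1}) (-1) ^+ fsum j *
     \prod_(l < r) (weight l ^+ w2) ^+ j l * ((q ^+ w2) ^+ fsum j) ^+ (n - i) *
     qnum (q ^+ w2) (fsum j) ^+ i.
Proof.
move=> i_le_n; apply: eq_bigr => j _; congr (_ * _).
have -> : \sum_(l < r) (n%:Z + h - (l.+1)%:Z - i%:Z) * (j l : nat)%:Z =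
    \sum_(l < r) (h - (l.+1)%:Z) * (j l : nat)%:Z + ((n - i) * fsum j)%N%:Z.
  rewrite /fsum PoszM -subzn // (big_morph Posz PoszD (erefl _)) mulr_sumr -big_split /=.
  by apply: eq_bigr => l _; ring.
have qw2_neq0 := expf_neq0 w2 (principal_neq0 q1).
rewrite expfzDr // zpow_sum_nat // -[_ ^ ((n - i) * fsum j)%N%:Z]/(_ ^+ ((n - i) * fsum j)%N).
rewrite mulnC exprM -!mulrA; congr (_ * (_ * _)).
by apply: eq_bigr => l _; rewrite exprnzAC.
Qed.

Lemma sum_Eqhr_Tqhr x w1 w2 : odd w2 -> q ^+ w1 != 1 -> q ^+ w2 != 1 ->
  (forall k, qpowZp absv (q ^+ w1) (zp_addn p (zp_muln p w2 x) k) = (q ^+ w1) ^+ k * Y) ->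
  \sum_(0 <= i < n.+1)
     'C(n, i)%:R * qnum q w2 ^+ i * qnum q w1 ^+ (n - i)
       * Eqhr absv p (n - i) (q ^+ w1) h r (zp_muln p w2 x)
       * Tqhr n i (q ^+ w2) h r w1
  = sym_sum w1 w2.
Proof.
move=> w2_odd qw1 qw2 qpowY.
set P := fun j : {ffun 'I_r -> 'I_w1} => \prod_(l < r) (weight l ^+ w2) ^+ j l.
transitivity (\sum_(j : {ffun 'I_r -> 'I_w1}) (-1) ^+ fsum j * P j *
    mint absv p r (integrand w1 (w2 * fsum j) n)).
  under [RHS]eq_bigr do rewrite mint_integrand_binomial // mulr_sumr.
  rewrite exchange_big /= big_mkord; apply: eq_bigr => i _.
  rewrite Tqhr_expand -1?ltnS // mulr_sumr; apply: eq_bigr => j _.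
  rewrite -(Eqhr_mint _ qw1 qpowY) /P (exprMn _ (qnum q w2)); ring.
apply: eq_bigr => j _; rewrite (mint_integrand_distribution _ _ w2_odd) mulr_sumr.
apply: eq_bigr => k _; rewrite exprD /P.
have -> : \prod_(l < r) weight l ^+ (w2 * j l + w1 * k l) =
    \prod_(l < r) (weight l ^+ w2) ^+ j l * \prod_(l < r) weight l ^+ (w1 * k l).
  by rewrite -big_split; apply: eq_bigr => l _; rewrite exprD exprM.
ring.
Qed.

End Symmetry.

End Padic.

Theorem theorem4 (R : realType) (K : closedFieldType) (absv : K -> R) (p : nat)
  (Hp : prime p) (Hpodd : odd p) (HK : Cp_like absv p)
  (q : K) (Hq : absv (1 - q) < 1) (h : int) (r n w1 w2 : nat)
  (Hw1 : odd w1) (Hw2 : odd w2)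
  (Hqw1 : q ^+ w1 != 1) (Hqw2 : q ^+ w2 != 1)
  (x : nat -> nat) (Hx : is_Zp p x) :
  \sum_(0 <= i < n.+1)
     'C(n, i)%:R * qnum q w2 ^+ i * qnum q w1 ^+ (n - i)
       * Eqhr absv p (n - i) (q ^+ w1) h r (zp_muln p w2 x)
       * Tqhr n i (q ^+ w2) h r w1
  = \sum_(0 <= i < n.+1)
     'C(n, i)%:R * qnum q w1 ^+ i * qnum q w2 ^+ (n - i)
       * Eqhr absv p (n - i) (q ^+ w2) h r (zp_muln p w1 x)
       * Tqhr n i (q ^+ w1) h r w2.
Proof.
have q1 : principal absv q by rewrite /principal (absv_distC HK).
have [X qX] := cvg_expr_Zp Hp HK q1 Hx.
rewrite (sum_Eqhr_Tqhr Hp Hpodd HK h r n (Y := X ^+ (w1 * w2)) q1 Hw2 Hqw1 Hqw2); last first.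
  by move=> k; exact: qpowZp_affine.
rewrite (sum_Eqhr_Tqhr Hp Hpodd HK h r n (Y := X ^+ (w1 * w2)) q1 Hw1 Hqw2 Hqw1); last first.
  by move=> k; rewrite mulnC; exact: qpowZp_affine.
exact: sym_sumC.
Qed.
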